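(* Let $(G,d,(D_\lambda)_{\lambda>0},\Gamma,V)$ be a dilation datum, $\lambda_0>1$ with $D:=D_{\lambda_0}$ satisfying $D(\Gamma)\subset\Gamma$, and $r_+>0$ with $V\subset B(e,r_+)$. Let $r>r_+$ and $\lambda_0>\frac{r}{r-r_+}$. If $B(e,r)\subset V(n_0)$ for some $n_0\in\mathbb N$, then every bounded subset of $G$ is contained in $V(n)$ for some $n\in\mathbb N$, and for all $k\in\mathbb N$ \[B(e,c_-\lambda_0^{k-1})\subset V(n_0+k)\subset B(e,c_+\lambda_0^{n_0+k}),\] where $c_-:=\lambda_0(r-r_+)-r>0$ and $c_+:=r\big(1+\frac{\lambda_0}{\lambda_0-1}\big)$.
   Context: Dilation datum $(G,d,(D_\lambda),\Gamma,V)$: $G$ connected lcsc group, $d$ left-invariant metric inducing the topology, $\lambda\mapsto D_\lambda$ homomorphism $(\mathbb R_{>0},\cdot)\to\mathrm{Aut}(G)$ with $d(D_\lambda g,D_\lambda h)=\lambda d(g,h)$; $\Gamma$ uniform lattice with $D_\lambda(\Gamma)\subset\Gamma$ for some $\lambda>1$; $V$ bounded Borel set containing an open identity neighbourhood with $G=\bigsqcup_{\gamma\in\Gamma}\gamma V$. $B(g,r)$ is the open $d$-ball. $V(0):=V$ and $V(n):=D\big((V(n-1)\cap\Gamma)V\big)$ for $n\ge1$. *)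

From HB Require Import structures.
From mathcomp Require Import all_boot all_order all_algebra.
From mathcomp Require Import boolp classical_sets cardinality reals.
Set Implicit Arguments. Unset Strict Implicit. Unset Printing Implicit Defensive.
Import Order.TTheory GRing.Theory Num.Theory.
Local Open Scope classical_set_scope.
Local Open Scope ring_scope.

Section DilationDatum.
Variables (R : realType) (G : groupType) (d : G -> G -> R).

Definition dball (g : G) (r : R) : set G := [set h | d g h < r].

Definition dopen (U : set G) : Prop :=
  forall x, U x -> exists2 r : R, 0 < r & dball x r `<=` U.

Definition dcompact (K : set G) : Prop :=
  forall (I : Type) (U : I -> set G), (forall i, dopen (U i)) ->
    K `<=` \bigcup_(i in [set: I]) U i ->
    exists F : set I, finite_set F /\ K `<=` \bigcup_(i in F) U i.

Definition dbounded (B : set G) : Prop := exists (x : G) (r : R), B `<=` dball x r.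

Definition dborel (A : set G) : Prop :=
  forall S : set (set G),
    (forall U, dopen U -> S U) ->
    (forall X, S X -> S (~` X)) ->
    (forall X : nat -> set G, (forall n, S (X n)) -> S (\bigcup_(n in [set: nat]) X n)) ->
    S A.

Definition is_metric : Prop :=
  [/\ forall x y, 0 <= d x y, forall x y, d x y = 0 <-> x = y,
      forall x y, d x y = d y x & forall x y z, d x z <= d x y + d y z].

Definition left_invariant : Prop := forall g x y, d (g * x)%g (g * y)%g = d x y.

Definition topological_group : Prop :=
  (forall x y (eps : R), 0 < eps -> exists2 del : R, 0 < del &
     forall x' y', d x x' < del -> d y y' < del -> d (x * y)%g (x' * y')%g < eps) /\
  (forall x (eps : R), 0 < eps -> exists2 del : R, 0 < del &
     forall x', d x x' < del -> d (x^-1)%g (x'^-1)%g < eps).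

Definition dconnected : Prop :=
  forall U, dopen U -> dopen (~` U) -> U = set0 \/ U = setT.

Definition locally_compact : Prop :=
  forall x, exists K U, dcompact K /\ dopen U /\ U x /\ U `<=` K.

Definition second_countable : Prop :=
  exists B : nat -> set G, (forall n, dopen (B n)) /\
    forall U x, dopen U -> U x -> exists n, B n x /\ B n `<=` U.

Definition subgroup (H : set G) : Prop :=
  [/\ H 1%g, forall x y, H x -> H y -> H (x * y)%g & forall x, H x -> H (x^-1)%g].

Definition uniform_lattice (Gam : set G) : Prop :=
  [/\ subgroup Gam,
      (forall g, Gam g -> exists2 r : R, 0 < r & dball g r `&` Gam = [set g]) &
      exists2 K, dcompact K & forall x, exists g k, [/\ Gam g, K k & x = (g * k)%g]].

Definition group_automorphism (f : G -> G) : Prop :=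
  (forall x y, f (x * y)%g = (f x * f y)%g) /\ bijective f.

Record dilation_datum (D : R -> G -> G) (Gam V : set G) : Prop := {
  dd_metric : is_metric;
  dd_left_inv : left_invariant;
  dd_topgroup : topological_group;
  dd_connected : dconnected;
  dd_loc_compact : locally_compact;
  dd_second_countable : second_countable;
  dd_aut : forall l, 0 < l -> group_automorphism (D l);
  dd_hom1 : D 1 = id;
  dd_homM : forall l m, 0 < l -> 0 < m -> D (l * m) = D l \o D m;
  dd_scale : forall l g h, 0 < l -> d (D l g) (D l h) = l * d g h;
  dd_lattice : uniform_lattice Gam;
  dd_lattice_dil : exists2 l, 1 < l & D l @` Gam `<=` Gam;
  dd_V_bounded : dbounded V;
  dd_V_borel : dborel V;
  dd_V_nbhd : exists U, [/\ dopen U, U 1%g & U `<=` V];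
  dd_tiling_cover : forall x, exists g, Gam g /\ V (g^-1 * x)%g;
  dd_tiling_disj : forall x g1 g2, Gam g1 -> Gam g2 ->
      V (g1^-1 * x)%g -> V (g2^-1 * x)%g -> g1 = g2
}.

End DilationDatum.

Fixpoint Vseq (G : groupType) (Dl : G -> G) (Gam V : set G) (n : nat) : set G :=
  match n with
  | 0 => V
  | n'.+1 => Dl @` [set x | exists g v, [/\ (Vseq Dl Gam V n' `&` Gam) g, V v & x = (g * v)%g]]
  end.

From HB Require Import structures.
From mathcomp Require Import all_boot all_order all_algebra.
From mathcomp Require Import boolp classical_sets cardinality reals.
From mathcomp Require Import ring lra.
Set Implicit Arguments. Unset Strict Implicit. Unset Printing Implicit Defensive.
Import Order.TTheory GRing.Theory Num.Theory.
Local Open Scope classical_set_scope.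
Local Open Scope ring_scope.

(* The recursion V(n+1) = D((V(n) ∩ Γ) V) and V ⊂ B(e,r+) turn radii of balls
   around e into affine recursions: a ball B(e,s) ⊂ V(m) gives
   B(e, λ(s - r+)) ⊂ V(m+1), since every point of B(e, s - r+) lies in a tile
   γV with γ ∈ B(e,s); and V(n) ⊂ B(e,u) gives V(n+1) ⊂ B(e, λ(u + r+)).
   Both recursions are affine with ratio λ > 1, so they are solved around
   their fixed points ±r+ λ/(λ-1), which yields the constants c- and c+.
   Exponential growth of the lower radii then absorbs every bounded set. *)

Lemma bernoulli_ineq (R : realDomainType) (x : R) (n : nat) :
  0 <= x -> 1 + n%:R * x <= (1 + x) ^+ n.
Proof.
move=> x_ge0; elim: n => [|n IHn]; first by rewrite expr0 mul0r addr0.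
have n_ge0 : 0 <= n%:R :> R by [].
have nxx_ge0 : 0 <= n%:R * x * x by rewrite !mulr_ge0.
rewrite exprS -natr1; apply: le_trans (ler_wpM2l _ IHn); nra.
Qed.

Lemma expr_unbounded (R : realType) (x c M : R) :
  1 < x -> 0 < c -> exists k : nat, M < c * x ^+ k.
Proof.
move=> x_gt1 c_gt0.
have [k Mk] : exists k : nat, `|M| / (c * (x - 1)) < k%:R.
  by exists (Num.Def.archi_bound (`|M| / (c * (x - 1))));
     apply/archi_boundP/divr_ge0 => //; rewrite mulr_ge0 //; lra.
exists k; have cx_gt0 : 0 < c * (x - 1) by rewrite mulr_gt0 //; lra.
rewrite ltr_pdivrMr // in Mk.
have := @bernoulli_ineq _ (x - 1) k; rewrite [1 + (x - 1)]addrC subrK.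
rewrite -(ler_pM2l c_gt0) => /(_ ltac:(lra)) bern.
have := ler_norm M; nra.
Qed.

Lemma expr_pred_le_div (R : realFieldType) (lam c : R) (k : nat) :
  1 < lam -> 0 <= c -> c * lam ^ (k%:Z - 1) <= lam ^+ k * (c / (lam - 1)).
Proof.
move=> lam_gt1 c_ge0; have lam_gt0 : 0 < lam by lra.
rewrite expfzDr ?gt_eqF // exprN1 mulrCA ler_pM2l ?exprn_gt0 //.
by apply: ler_wpM2l => //; rewrite lef_pV2 ?posrE; lra.
Qed.

Section DilatedTiles.
Variables (R : realType) (G : groupType) (d : G -> G -> R).

Lemma dball_le (x : G) (a b : R) : a <= b -> dball d x a `<=` dball d x b.
Proof. by move=> ab y; rewrite /dball /= => /lt_le_trans; apply. Qed.

Hypothesis d_sym : forall x y, d x y = d y x.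
Hypothesis d_triangle : forall x y z, d x z <= d x y + d y z.
Hypothesis d_left_inv : left_invariant d.

Lemma dist_mulr (g v : G) : d g (g * v)%g = d 1%g v.
Proof. by rewrite -{1}(mulg1 g) d_left_inv. Qed.

Variables (Dl : G -> G) (lam rp : R) (Gam V : set G).
Hypothesis lam_gt1 : 1 < lam.
Hypothesis Dl_morph : {morph Dl : x y / (x * y)%g}.
Hypothesis Dl_surj : forall y, exists x, Dl x = y.
Hypothesis Dl_scale : forall g h, d (Dl g) (Dl h) = lam * d g h.
Hypothesis V_sub_ball : V `<=` dball d 1%g rp.
Hypothesis tiling_cover : forall x, exists g, Gam g /\ V (g^-1 * x)%g.

Local Notation Vn := (Vseq Dl Gam V).

Lemma dist1_Dl (x : G) : d 1%g (Dl x) = lam * d 1%g x.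
Proof.
have Dl1 : Dl 1%g = 1%g by apply/esym/(@mulgI _ (Dl 1%g)); rewrite -Dl_morph !mulg1.
by rewrite -{1}Dl1 Dl_scale.
Qed.

Lemma Vseq_ball_succ (m : nat) (s : R) :
  dball d 1%g s `<=` Vn m -> dball d 1%g (lam * (s - rp)) `<=` Vn m.+1.
Proof.
move=> ball_sub y; have [x <-] := Dl_surj y.
have lam_gt0 : 0 < lam := lt_trans ltr01 lam_gt1.
rewrite /dball /= dist1_Dl ltr_pM2l //.
move=> x_near; have [g [Gam_g Vg]] := tiling_cover x.
exists x => //; exists g, (g^-1 * x)%g; split=> //; last by rewrite mulVKg.
split=> //; apply: ball_sub; rewrite /dball /=.
have gx_near : d x g < rp.
  by rewrite d_sym -[X in d _ X](mulVKg g) dist_mulr; exact: V_sub_ball.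
have := d_triangle 1%g x g; lra.
Qed.

Lemma Vseq_ball_add (m k : nat) (s : R) :
  dball d 1%g s `<=` Vn m ->
  dball d 1%g (rp * (lam / (lam - 1)) + lam ^+ k * (s - rp * (lam / (lam - 1))))
    `<=` Vn (m + k).
Proof.
have lam1_neq0 : lam - 1 != 0 by rewrite subr_eq0 gt_eqF.
move=> ball_sub; elim: k => [|k IHk]; first by rewrite expr0 mul1r addn0 addrC subrK.
rewrite addnS; set c := rp * _ in IHk *.
have -> : c + lam ^+ k.+1 * (s - c) = lam * (c + lam ^+ k * (s - c) - rp).
  by rewrite /c exprS; field.
exact: Vseq_ball_succ.
Qed.

Lemma Vseq_absorbs_bounded (m : nat) (s : R) :
  rp * (lam / (lam - 1)) < s -> dball d 1%g s `<=` Vn m ->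
  forall B, dbounded d B -> exists n, B `<=` Vn n.
Proof.
move=> s_big ball_sub B [x [rho B_sub]].
have gap : 0 < s - rp * (lam / (lam - 1)) by rewrite subr_gt0.
have [k Mk] := expr_unbounded (d 1%g x + rho - rp * (lam / (lam - 1))) lam_gt1 gap.
exists (m + k)%N => y /B_sub By; apply: (Vseq_ball_add (k := k) ball_sub).
rewrite /dball /= in By *; have := d_triangle 1%g x y; rewrite mulrC in Mk; lra.
Qed.

Lemma Vseq_sub_ball (n : nat) :
  Vn n `<=` dball d 1%g (lam ^+ n * (rp + rp * (lam / (lam - 1))) - rp * (lam / (lam - 1))).
Proof.
have lam1_neq0 : lam - 1 != 0 by rewrite subr_eq0 gt_eqF.
elim: n => [|n IHn] y /=; first by rewrite expr0 mul1r addrK; exact: V_sub_ball.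
case=> _ [g [v [[Vg _] Vv ->]]] <-; rewrite /dball /= dist1_Dl.
have := d_triangle 1%g g (g * v)%g; rewrite dist_mulr.
have := IHn g Vg; have := V_sub_ball Vv; rewrite /dball /= => v_near g_near gv_le.
set u := lam ^+ n * _ - _ in g_near.
have -> : lam ^+ n.+1 * (rp + rp * (lam / (lam - 1))) - rp * (lam / (lam - 1))
    = lam * (u + rp) by rewrite /u exprS; field.
rewrite ltr_pM2l ?(lt_trans ltr01 lam_gt1) //; lra.
Qed.

End DilatedTiles.

Theorem lemma5 (R : realType) (G : groupType) (d : G -> G -> R) (D : R -> G -> G)
  (Gam V : set G) (lam0 rp r : R) (n0 : nat) :
  dilation_datum d D Gam V ->
  1 < lam0 -> D lam0 @` Gam `<=` Gam ->
  0 < rp -> V `<=` dball d 1%g rp ->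
  rp < r -> r / (r - rp) < lam0 ->
  dball d 1%g r `<=` Vseq (D lam0) Gam V n0 ->
  let cm := lam0 * (r - rp) - r in
  let cp := r * (1 + lam0 / (lam0 - 1)) in
  [/\ 0 < cm,
      (forall B, dbounded d B -> exists n, B `<=` Vseq (D lam0) Gam V n) &
      forall k : nat,
        dball d 1%g (cm * lam0 ^ (k%:Z - 1)) `<=` Vseq (D lam0) Gam V (n0 + k) /\
        Vseq (D lam0) Gam V (n0 + k) `<=` dball d 1%g (cp * lam0 ^+ (n0 + k))].
Proof.
move=> dd lam_gt1 _ rp_gt0 V_sub rp_lt_r lam_big ball_sub cm cp.
have lam_gt0 : 0 < lam0 by lra.
have [_ _ d_sym d_triangle] := dd_metric dd.
have [Dl_morph [Di _ DiK]] := dd_aut dd lam_gt0.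
have Dl_surj y : exists x, D lam0 x = y by exists (Di y).
have Dl_scale g h := dd_scale dd g h lam_gt0.
have cm_gt0 : 0 < cm by move: lam_big; rewrite /cm ltr_pdivrMr; lra.
have rpq_ge0 : 0 <= rp * (lam0 / (lam0 - 1)) by rewrite mulr_ge0 ?divr_ge0; lra.
have r_fix : r - rp * (lam0 / (lam0 - 1)) = cm / (lam0 - 1) by rewrite /cm; field; lra.
have r_big : rp * (lam0 / (lam0 - 1)) < r by rewrite -subr_gt0 r_fix divr_gt0 //; lra.
split=> //.
- move=> B; apply: (Vseq_absorbs_bounded d_sym d_triangle (dd_left_inv dd) lam_gt1
    Dl_morph Dl_surj Dl_scale V_sub (dd_tiling_cover dd) r_big ball_sub).
- move=> k; split.
  + apply: subset_trans (Vseq_ball_add d_sym d_triangle (dd_left_inv dd) lam_gt1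
      Dl_morph Dl_surj Dl_scale V_sub (dd_tiling_cover dd) (k := k) ball_sub).
    apply: dball_le; rewrite r_fix.
    have := expr_pred_le_div k lam_gt1 (ltW cm_gt0); lra.
  + move=> y /(Vseq_sub_ball d_triangle (dd_left_inv dd) lam_gt1 Dl_morph Dl_scale V_sub).
    apply: dball_le; rewrite /cp.
    have : 0 < lam0 / (lam0 - 1) by rewrite divr_gt0; lra.
    move: rpq_ge0; move: (lam0 / (lam0 - 1)) => q rpq_ge0 q_gt0.
    have : 0 < (r - rp) * ((1 + q) * lam0 ^+ (n0 + k)).
      by rewrite !mulr_gt0 ?subr_gt0 ?exprn_gt0 // addr_gt0.
    lra.
Qed.
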